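(* Let $\alpha\neq0$ be real and let $u=u(x)$ be a solution of $$\frac{u''}{1-u'^2}=\frac{\alpha}{u},\qquad u>0,\quad u'^2<1,$$ defined on its maximal domain $I\subset\mathbb R$ (an interval). Then $u$ is symmetric about a vertical line, and $I=\mathbb R$ if $\alpha>0$, while $I$ is a bounded interval if $\alpha<0$. Furthermore: (1) If $\alpha>0$, then $u$ is convex with a unique global minimum, $\lim_{r\to\infty}u(r)=\infty$ and $\lim_{r\to\infty}u'(r)=1$. (2) If $\alpha<0$, then $u$ is concave with a unique global maximum, and if $I=(-b,b)$, then $\lim_{r\to b}u(r)=0$ and $\lim_{r\to b}u'(r)=-1$.
   Context: The maximal domain of $u$ is the largest interval on which the solution exists while satisfying $u>0$ and $u'^2<1$. *)

From Stdlib Require Import Reals.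
From Coquelicot Require Import Coquelicot.
Open Scope R_scope.

Definition open_interval (I : R -> Prop) : Prop :=
  (exists x, I x) /\ open I /\
  (forall x y z, I x -> I z -> x <= y <= z -> I y).

Definition is_solution (alpha : R) (I : R -> Prop) (u : R -> R) : Prop :=
  open_interval I /\
  forall x, I x ->
    ex_derive u x /\ ex_derive (Derive u) x /\
    0 < u x /\ (Derive u x) ^ 2 < 1 /\
    Derive (Derive u) x / (1 - (Derive u x) ^ 2) = alpha / u x.

Definition is_maximal_solution (alpha : R) (I : R -> Prop) (u : R -> R) : Prop :=
  is_solution alpha I u /\
  forall (J : R -> Prop) (v : R -> R),
    is_solution alpha J v ->
    (forall x, I x -> J x) ->
    (forall x, I x -> v x = u x) ->
    forall x, J x -> I x.

Definition convex_on (I : R -> Prop) (u : R -> R) : Prop :=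
  forall x y t, I x -> I y -> 0 <= t <= 1 ->
    u (t * x + (1 - t) * y) <= t * u x + (1 - t) * u y.

Definition concave_on (I : R -> Prop) (u : R -> R) : Prop :=
  forall x y t, I x -> I y -> 0 <= t <= 1 ->
    t * u x + (1 - t) * u y <= u (t * x + (1 - t) * y).

Definition unique_global_min (I : R -> Prop) (u : R -> R) : Prop :=
  exists x0, I x0 /\ (forall x, I x -> u x0 <= u x) /\
    (forall x1, I x1 -> (forall x, I x -> u x1 <= u x) -> x1 = x0).

Definition unique_global_max (I : R -> Prop) (u : R -> R) : Prop :=
  exists x0, I x0 /\ (forall x, I x -> u x <= u x0) /\
    (forall x1, I x1 -> (forall x, I x -> u x <= u x1) -> x1 = x0).

Definition symmetric_about_vertical_line (I : R -> Prop) (u : R -> R) : Prop :=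
  exists c, forall x, I x -> I (2 * c - x) /\ u (2 * c - x) = u x.

(* Write p = u' and let sg = +-1 be the sign of alpha.  Along a solution, t = sg artanh p
   increases, with t' = |alpha| / u, and alpha ln u - ln cosh t is a first integral, so
   u = exp ((L + ln cosh t) / alpha).  Hence dx/dt = u / |alpha| is an explicit positive function
   of t: the graph of u is the curve t |-> (c + G t, exp ((L + ln cosh t) / alpha)), t in R, with
   G' = exp ((L + ln cosh t) / alpha) / |alpha|, and by maximality the domain is exactly c + G(R).
   Everything follows from this description: G is odd, so u is symmetric about x = c;
   u' = sg tanh t is monotone in x; G' >= G'(0) > 0 if alpha > 0, so the domain is R, whereas
   G' = O(exp (t / alpha)) is integrable if alpha < 0, so the domain is bounded; and t -> +oo at
   the right end of the domain, which gives the limits of u and u'. *)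

From Stdlib Require Import Reals Ranalysis5 Lra ClassicalEpsilon.
From Coquelicot Require Import Coquelicot.
Open Scope R_scope.

(** * Hyperbolic functions *)

Definition lncosh (t : R) : R := ln (cosh t).

Definition artanh (p : R) : R := ln ((1 + p) / (1 - p)) / 2.

Lemma cosh_opp t : cosh (- t) = cosh t.
Proof. unfold cosh. rewrite Ropp_involutive. lra. Qed.

Lemma cosh_sub_1 t : cosh t - 1 = (exp t - 1) ^ 2 / (2 * exp t).
Proof.
  unfold cosh. rewrite exp_Ropp. pose proof (exp_pos t). field. lra.
Qed.

Lemma one_lt_cosh t : t <> 0 -> 1 < cosh t.
Proof.
  intro Ht. pose proof (cosh_sub_1 t). pose proof (exp_pos t).
  assert (exp t <> 1) by (rewrite <- exp_0; intro E; exact (Ht (exp_inv _ _ E))).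
  assert (0 < (exp t - 1) ^ 2 / (2 * exp t)); [|lra].
  apply Rdiv_lt_0_compat; [apply pow2_gt_0 | ]; lra.
Qed.

Lemma tanh_opp t : tanh (- t) = - tanh t.
Proof.
  unfold tanh, sinh, cosh. rewrite Ropp_involutive.
  pose proof (exp_pos t). pose proof (exp_pos (- t)). field. lra.
Qed.

Lemma tanh_bound t : -1 < tanh t < 1.
Proof.
  unfold tanh, sinh, cosh. pose proof (exp_pos t). pose proof (exp_pos (- t)).
  split; [apply Rlt_div_r | apply Rlt_div_l]; lra.
Qed.

Lemma is_derive_tanh t : is_derive tanh t (1 - tanh t ^ 2).
Proof.
  unfold tanh, sinh, cosh. pose proof (exp_pos t). pose proof (exp_pos (- t)).
  auto_derive; [lra | field; lra].
Qed.

Lemma tanh_le a b : a <= b -> tanh a <= tanh b.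
Proof.
  intros [Hab | ->]; [left | right; reflexivity].
  apply (incr_function tanh m_infty p_infty (fun t => 1 - tanh t ^ 2)); try easy.
  - intros t _ _. apply is_derive_tanh.
  - intros t _ _. pose proof (tanh_bound t). nra.
Qed.

Lemma tanh_sign sg t : sg = 1 \/ sg = -1 -> tanh (sg * t) = sg * tanh t.
Proof.
  intros [-> | ->]; [now rewrite !Rmult_1_l |].
  replace (-1 * t) with (- t) by ring. rewrite tanh_opp. ring.
Qed.

Lemma is_lim_tanh_p : is_lim tanh p_infty 1.
Proof.
  apply (is_lim_ext (fun t => 1 - 2 * / (exp t * exp t + 1))).
  { intro t. unfold tanh, sinh, cosh. rewrite exp_Ropp.
    pose proof (exp_pos t). field. split; nra. }
  assert (Hinv : is_lim (fun t => 2 * / (exp t * exp t + 1)) p_infty 0).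
  { replace (Finite 0) with (Rbar_mult 2 (Rbar_inv p_infty)) by (simpl; f_equal; ring).
    apply is_lim_scal_l, is_lim_inv; [| discriminate].
    apply (is_lim_plus _ _ _ p_infty 1 p_infty); [| apply is_lim_const | easy].
    apply (is_lim_mult _ _ _ p_infty p_infty); [apply is_lim_exp_p | apply is_lim_exp_p | easy]. }
  pose proof (is_lim_minus' _ _ _ 1 0 (is_lim_const 1 p_infty) Hinv) as K.
  now rewrite Rminus_0_r in K.
Qed.

Lemma tanh_artanh p : -1 < p < 1 -> tanh (artanh p) = p.
Proof.
  intro Hp. unfold tanh, sinh, cosh, artanh. rewrite exp_Ropp.
  set (z := (1 + p) / (1 - p)).
  assert (Hz : 0 < z) by (apply Rdiv_lt_0_compat; lra).
  set (e := exp (ln z / 2)).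
  assert (He : 0 < e) by apply exp_pos.
  assert (E : e * e = z).
  { unfold e. rewrite <- exp_plus. replace (ln z / 2 + ln z / 2) with (ln z) by field.
    now apply exp_ln. }
  replace ((e - / e) / 2 / ((e + / e) / 2)) with ((e * e - 1) / (e * e + 1))
    by (field; split; nra).
  rewrite E. unfold z. field. lra.
Qed.

Lemma is_derive_artanh p : -1 < p < 1 -> is_derive artanh p (/ (1 - p ^ 2)).
Proof.
  intro Hp. unfold artanh. auto_derive.
  - repeat split; try lra. apply Rdiv_lt_0_compat; lra.
  - field. repeat split; nra.
Qed.

Lemma lncosh_opp t : lncosh (- t) = lncosh t.
Proof. unfold lncosh. now rewrite cosh_opp. Qed.

Lemma lncosh_0 : lncosh 0 = 0.
Proof. unfold lncosh. now rewrite cosh_0, ln_1. Qed.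

Lemma lncosh_pos t : t <> 0 -> 0 < lncosh t.
Proof.
  intro Ht. unfold lncosh. rewrite <- ln_1. apply ln_increasing; [lra | now apply one_lt_cosh].
Qed.

Lemma lncosh_ge_sub_ln2 t : t - ln 2 <= lncosh t.
Proof.
  unfold lncosh. rewrite <- (ln_exp t) at 1. rewrite <- ln_div by (apply exp_pos || lra).
  apply ln_le; [apply Rdiv_lt_0_compat; [apply exp_pos | lra] |].
  unfold cosh. pose proof (exp_pos (- t)). lra.
Qed.

Lemma is_derive_lncosh t : is_derive lncosh t (tanh t).
Proof.
  unfold lncosh, tanh, sinh, cosh. pose proof (exp_pos t). pose proof (exp_pos (- t)).
  auto_derive; [lra | field; lra].
Qed.

Lemma is_lim_plus_lncosh_p L : is_lim (fun t => L + lncosh t) p_infty p_infty.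
Proof.
  apply (is_lim_le_p_loc (fun t => L + (t - ln 2))).
  - exists 0. intros t _. pose proof (lncosh_ge_sub_ln2 t). lra.
  - apply (is_lim_plus _ _ _ L p_infty p_infty); [apply is_lim_const | | easy].
    eapply is_lim_minus; [apply is_lim_id | apply is_lim_const | easy].
Qed.

Lemma exp_le_compat a b : a <= b -> exp a <= exp b.
Proof. intros [Hlt | ->]; [left; now apply exp_increasing | right; reflexivity]. Qed.

(** * Calculus on intervals *)

Definition is_interval (P : R -> Prop) : Prop :=
  forall x y z, P x -> P z -> x <= y <= z -> P y.

Lemma MVT_is_derive (f df : R -> R) a b : a <= b ->
  (forall z, a <= z <= b -> is_derive f z (df z)) ->
  exists c, a <= c <= b /\ f b - f a = df c * (b - a).
Proof.
  intros Hab Hd.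
  destruct (MVT_gen f a b df) as [c [Hc E]]; rewrite Rmin_left, Rmax_right in * by exact Hab.
  - intros z Hz. apply Hd. lra.
  - intros z Hz. apply continuity_pt_filterlim, (ex_derive_continuous f z).
    exists (df z). now apply Hd.
  - now exists c.
Qed.

Lemma le_of_is_derive_nonneg (f df : R -> R) a b : a <= b ->
  (forall z, a <= z <= b -> is_derive f z (df z)) ->
  (forall z, a <= z <= b -> 0 <= df z) -> f a <= f b.
Proof.
  intros Hab Hd Hpos. destruct (MVT_is_derive f df a b Hab Hd) as [c [Hc E]].
  specialize (Hpos c Hc). nra.
Qed.

Lemma is_derive_0_const_on (P : R -> Prop) (f : R -> R) : is_interval P ->
  (forall x, P x -> is_derive f x 0) -> forall x y, P x -> P y -> f x = f y.
Proof.
  intros HP Hd.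
  enough (K : forall x y, x <= y -> P x -> P y -> f x = f y).
  { intros x y Hx Hy. destruct (Rle_or_lt x y); [| symmetry]; apply K; auto; lra. }
  intros x y Hxy Hx Hy.
  destruct (MVT_is_derive f (fun _ => 0) x y Hxy) as [c [_ E]]; [| lra].
  intros z Hz. apply Hd, (HP x z y); auto.
Qed.

Lemma convex_on_of_derive_nondecreasing (P : R -> Prop) (f df : R -> R) : is_interval P ->
  (forall x, P x -> is_derive f x (df x)) ->
  (forall x y, P x -> P y -> x <= y -> df x <= df y) ->
  convex_on P f.
Proof.
  intros HP Hd Hmono.
  enough (K : forall x y t, P x -> P y -> x <= y -> 0 <= t <= 1 ->
            f (t * x + (1 - t) * y) <= t * f x + (1 - t) * f y).
  { intros x y t Hx Hy Ht. destruct (Rle_or_lt x y) as [Hxy | Hyx]; [now apply K |].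
    replace (t * x + (1 - t) * y) with ((1 - t) * y + (1 - (1 - t)) * x) by ring.
    replace (t * f x + (1 - t) * f y) with ((1 - t) * f y + (1 - (1 - t)) * f x) by ring.
    apply K; auto; lra. }
  intros x y t Hx Hy Hxy Ht.
  set (z := t * x + (1 - t) * y).
  assert (Hz : x <= z <= y) by (unfold z; nra).
  assert (Hd' : forall w, x <= w <= y -> is_derive f w (df w))
    by (intros w Hw; apply Hd, (HP x w y); auto).
  destruct (MVT_is_derive f df x z) as [c1 [Hc1 E1]]; [lra | intros; apply Hd'; lra |].
  destruct (MVT_is_derive f df z y) as [c2 [Hc2 E2]]; [lra | intros; apply Hd'; lra |].
  assert (Hc : df c1 <= df c2) by (apply Hmono; try apply (HP x _ y); auto; lra).
  assert (Gap : t * f x + (1 - t) * f y - f z = t * (1 - t) * (y - x) * (df c2 - df c1)).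
  { replace (t * f x + (1 - t) * f y - f z) with (- t * (f z - f x) + (1 - t) * (f y - f z))
      by ring.
    rewrite E1, E2. unfold z. ring. }
  assert (0 <= t * (1 - t) * (y - x) * (df c2 - df c1)).
  { apply Rmult_le_pos; [apply Rmult_le_pos |]; nra. }
  fold z. lra.
Qed.

Lemma concave_on_of_derive_nonincreasing (P : R -> Prop) (f df : R -> R) : is_interval P ->
  (forall x, P x -> is_derive f x (df x)) ->
  (forall x y, P x -> P y -> x <= y -> df y <= df x) ->
  concave_on P f.
Proof.
  intros HP Hd Hmono x y t Hx Hy Ht.
  assert (Hconv : convex_on P (fun x => - f x)).
  { apply (convex_on_of_derive_nondecreasing P _ (fun x => - df x) HP).
    - intros w Hw. apply (is_derive_opp f w (df w)), Hd, Hw.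
    - intros a b Ha Hb Hab. specialize (Hmono a b Ha Hb Hab). lra. }
  specialize (Hconv x y t Hx Hy Ht). simpl in Hconv. lra.
Qed.

(** * Inverse of a function with positive derivative *)

(* Off the range of [G] the value is an arbitrary real. *)
Definition inverse_fun (G : R -> R) (y : R) : R := epsilon (inhabits 0) (fun s => G s = y).

Lemma inverse_fun_spec G y : (exists s, G s = y) -> G (inverse_fun G y) = y.
Proof. exact (epsilon_spec (inhabits 0) (fun s => G s = y)). Qed.

Definition translated_range (G : R -> R) (c x : R) : Prop := exists s, G s = x - c.

Section IncreasingInverse.

Variables G g : R -> R.
Hypothesis G_derive : forall s, is_derive G s (g s).
Hypothesis g_pos : forall s, 0 < g s.

Lemma increasing_lt x y : x < y -> G x < G y.
Proof.
  intro Hxy. apply (incr_function G m_infty p_infty g); try easy.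
  intros s _ _. apply g_pos.
Qed.

Lemma increasing_le_reg x y : G x <= G y -> x <= y.
Proof.
  intro H. destruct (Rle_or_lt x y) as [| Hyx]; [easy |].
  apply increasing_lt in Hyx. lra.
Qed.

Lemma inverse_fun_comp s : inverse_fun G (G s) = s.
Proof.
  assert (E : G (inverse_fun G (G s)) = G s) by (apply inverse_fun_spec; now exists s).
  apply Rle_antisym; apply increasing_le_reg; lra.
Qed.

Lemma increasing_continuous s : continuity_pt G s.
Proof.
  apply continuity_pt_filterlim, (ex_derive_continuous G s). now exists (g s).
Qed.

Lemma increasing_IVT a b y : a <= b -> G a <= y <= G b ->
  exists s, a <= s <= b /\ G s = y.
Proof.
  intros Hab Hy.
  destruct (IVT_gen G a b y (fun s => increasing_continuous s)) as [s [Hs E]];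
    rewrite Rmin_left, Rmax_right in * by (auto; lra).
  - lra.
  - now exists s.
Qed.

Lemma inverse_fun_lt y1 y2 : (exists s, G s = y1) -> (exists s, G s = y2) -> y1 < y2 ->
  inverse_fun G y1 < inverse_fun G y2.
Proof.
  intros H1%inverse_fun_spec H2%inverse_fun_spec Hy.
  destruct (Rle_or_lt (inverse_fun G y2) (inverse_fun G y1)) as [Hle | Hlt]; [| easy].
  destruct Hle as [Hlt | Heq].
  - apply increasing_lt in Hlt. lra.
  - rewrite Heq in H2. lra.
Qed.

Lemma translated_range_open c : open (translated_range G c).
Proof.
  intros x [s Hs].
  pose proof (increasing_lt (s - 1) s ltac:(lra)).
  pose proof (increasing_lt s (s + 1) ltac:(lra)).
  set (e := Rmin (G (s + 1) - (x - c)) ((x - c) - G (s - 1))).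
  assert (He : 0 < e) by (apply Rmin_pos; lra).
  exists (mkposreal e He). intros y Hy. change (Rabs (y - x) < e) in Hy.
  apply Rabs_def2 in Hy.
  assert (e <= G (s + 1) - (x - c)) by apply Rmin_l.
  assert (e <= (x - c) - G (s - 1)) by apply Rmin_r.
  destruct (increasing_IVT (s - 1) (s + 1) (y - c)) as [t [_ Ht]]; [lra | lra |].
  now exists t.
Qed.

Lemma translated_range_is_interval c : is_interval (translated_range G c).
Proof.
  intros x y z [sx Hx] [sz Hz] Hy.
  assert (sx <= sz) by (apply increasing_le_reg; lra).
  destruct (increasing_IVT sx sz (y - c)) as [t [_ Ht]]; [lra | lra |].
  now exists t.
Qed.

Lemma is_derive_inverse_fun y : (exists s, G s = y) ->
  is_derive (inverse_fun G) y (/ g (inverse_fun G y)).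
Proof.
  intros Hy%inverse_fun_spec. set (s0 := inverse_fun G y) in *.
  set (lb := G (s0 - 1)). set (ub := G (s0 + 1)).
  assert (Hlb : lb < y) by (rewrite <- Hy; apply increasing_lt; lra).
  assert (Hub : y < ub) by (rewrite <- Hy; apply increasing_lt; lra).
  assert (Hcancel : forall z, lb <= z <= ub -> G (inverse_fun G z) = z).
  { intros z Hz. apply inverse_fun_spec.
    destruct (increasing_IVT (s0 - 1) (s0 + 1) z) as [s [_ Hs]]; [lra | easy |].
    now exists s. }
  assert (Hbounds : forall z, lb <= z <= ub -> s0 - 1 <= inverse_fun G z <= s0 + 1).
  { intros z Hz. rewrite <- (Hcancel z Hz) in Hz. unfold lb, ub in Hz.
    split; apply increasing_le_reg; lra. }
  assert (Hcont : continuity_pt (inverse_fun G) y).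
  { apply (continuity_pt_recip_interv G (inverse_fun G) (s0 - 1) (s0 + 1)); try lra.
    - intros a b _ Hab _. now apply increasing_lt.
    - intros z H1 H2. apply Hcancel. change (id z) with z. unfold lb, ub. lra.
    - intros z H1 H2. apply Hbounds. unfold lb, ub. lra.
    - intros a _. apply increasing_continuous.
    - unfold lb, ub in *. lra. }
  assert (Hs0 : inverse_fun G lb <= inverse_fun G y <= inverse_fun G ub).
  { unfold lb, ub. rewrite !inverse_fun_comp. fold s0. lra. }
  apply is_derive_Reals.
  pose proof (derivable_pt_lim_recip_interv G (inverse_fun G) lb ub y
    (fun a _ => exist _ (g a) (proj1 (is_derive_Reals _ _ _) (G_derive a)))
    Hcont ltac:(lra) ltac:(lra) Hs0) as K.
  simpl in K. rewrite <- Rmult_1_l. apply K.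
  - intros z Hz. apply Hcancel, Hz.
  - apply Rgt_not_eq, g_pos.
Qed.

Lemma increasing_surjective : (forall M, exists s, M <= G s) -> (forall M, exists s, G s <= M) ->
  forall y, exists s, G s = y.
Proof.
  intros Habove Hbelow y.
  destruct (Habove y) as [b Hb]. destruct (Hbelow y) as [a Ha].
  destruct (increasing_IVT a b y) as [s [_ Hs]]; [| lra | now exists s].
  apply increasing_le_reg. lra.
Qed.

Lemma inverse_fun_opp y : (forall s, G (- s) = - G s) -> (exists s, G s = y) ->
  inverse_fun G (- y) = - inverse_fun G y.
Proof.
  intros Hodd Hy%inverse_fun_spec.
  rewrite <- Hy at 1. rewrite <- Hodd. apply inverse_fun_comp.
Qed.

End IncreasingInverse.

(** * The explicit solutions *)

(* With [sg] the sign of [al] (so [sg * al] is |al|), a solution is [u = profile t] at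
   [x = c + abscissa t], where [t = sg * artanh u']. *)
Definition profile (al L t : R) : R := exp ((L + lncosh t) / al).

Definition abscissa (al sg L s : R) : R := RInt (fun t => profile al L t / (sg * al)) 0 s.

Lemma profile_pos al L t : 0 < profile al L t.
Proof. apply exp_pos. Qed.

Lemma profile_opp al L t : profile al L (- t) = profile al L t.
Proof. unfold profile. now rewrite lncosh_opp. Qed.

Lemma profile_sign al L sg t : sg = 1 \/ sg = -1 -> profile al L (sg * t) = profile al L t.
Proof.
  intros [-> | ->]; [now rewrite Rmult_1_l |].
  replace (-1 * t) with (- t) by ring. apply profile_opp.
Qed.

Lemma is_derive_profile al L t :
  is_derive (profile al L) t (profile al L t * (tanh t / al)).
Proof.
  unfold profile. auto_derive; [now exists (tanh t); apply is_derive_lncosh |].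
  replace (Derive (fun x => lncosh x) t) with (tanh t)
    by (symmetry; apply is_derive_unique, is_derive_lncosh).
  unfold Rdiv. ring.
Qed.

Lemma profile_0_lt al L t : 0 < al -> t <> 0 -> profile al L 0 < profile al L t.
Proof.
  intros Hal Ht. apply exp_increasing. rewrite lncosh_0.
  apply Rmult_lt_compat_r; [now apply Rinv_0_lt_compat |].
  pose proof (lncosh_pos t Ht). lra.
Qed.

Lemma profile_lt_0 al L t : al < 0 -> t <> 0 -> profile al L t < profile al L 0.
Proof.
  intros Hal Ht. apply exp_increasing. rewrite lncosh_0.
  pose proof (lncosh_pos t Ht). pose proof (Rinv_lt_0_compat al Hal). unfold Rdiv. nra.
Qed.

Lemma profile_0_le al L t : 0 < al -> profile al L 0 <= profile al L t.
Proof.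
  intro Hal. destruct (Req_dec t 0) as [-> | Ht]; [lra |].
  left. now apply profile_0_lt.
Qed.

Lemma is_lim_profile_pos al L : 0 < al -> is_lim (profile al L) p_infty p_infty.
Proof.
  intro Hal. pose proof (Rinv_0_lt_compat al Hal).
  apply (is_lim_comp exp _ p_infty p_infty p_infty); [apply is_lim_exp_p | | now exists 0].
  pose proof (is_lim_scal_r _ (/ al) _ _ (is_lim_plus_lncosh_p L)) as K. simpl in K.
  destruct Rle_dec in K; [destruct Rle_lt_or_eq_dec in K |]; try lra. exact K.
Qed.

Lemma is_lim_profile_neg al L : al < 0 -> is_lim (profile al L) p_infty 0.
Proof.
  intro Hal. pose proof (Rinv_lt_0_compat al Hal).
  apply (is_lim_comp exp _ p_infty 0 m_infty); [apply is_lim_exp_m | | now exists 0].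
  pose proof (is_lim_scal_r _ (/ al) _ _ (is_lim_plus_lncosh_p L)) as K. simpl in K.
  destruct Rle_dec in K; [destruct Rle_lt_or_eq_dec in K |]; try lra. exact K.
Qed.

Lemma abscissa_density_pos al sg L : 0 < sg * al ->
  forall t, 0 < profile al L t / (sg * al).
Proof. intros Hsg_al t. apply Rdiv_lt_0_compat; [apply profile_pos | exact Hsg_al]. Qed.

Lemma is_derive_abscissa al sg L s : is_derive (abscissa al sg L) s (profile al L s / (sg * al)).
Proof.
  assert (Hcont : forall t, continuous (fun t => profile al L t / (sg * al)) t).
  { intro t. apply (ex_derive_continuous (fun t => profile al L t / (sg * al))).
    apply ex_derive_mult; [eexists; apply is_derive_profile | apply ex_derive_const]. }
  apply (is_derive_RInt (fun t => profile al L t / (sg * al)) _ 0 s); [| apply Hcont].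
  apply filter_forall. intro b.
  apply (RInt_correct (fun t => profile al L t / (sg * al))), ex_RInt_continuous.
  intros t _. apply Hcont.
Qed.

Lemma abscissa_0 al sg L : abscissa al sg L 0 = 0.
Proof. unfold abscissa. now rewrite RInt_point. Qed.

Lemma abscissa_opp al sg L s : abscissa al sg L (- s) = - abscissa al sg L s.
Proof.
  set (A := abscissa al sg L).
  enough (K : forall s, A s + A (- s) = A 0 + A (- 0)).
  { specialize (K s). rewrite Ropp_0 in K. unfold A in *. rewrite abscissa_0 in K. lra. }
  intro s'. apply (is_derive_0_const_on (fun _ => True) (fun s => A s + A (- s)));
    [easy | | easy | easy].
  intros x _. rewrite <- (Rplus_opp_r (profile al L x / (sg * al))).
  apply (is_derive_plus A (fun s => A (- s))); [apply is_derive_abscissa |].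
  replace (- (profile al L x / (sg * al))) with (-1 * (profile al L (- x) / (sg * al)))
    by (rewrite profile_opp; ring).
  apply (is_derive_comp A Ropp); [apply is_derive_abscissa | auto_derive; auto; ring].
Qed.

Lemma abscissa_surjective al sg L : 0 < al -> 0 < sg * al ->
  forall y, exists s, abscissa al sg L s = y.
Proof.
  intros Hal Hsg_al.
  set (A := abscissa al sg L). set (m := profile al L 0 / (sg * al)).
  assert (Hm : 0 < m) by apply (abscissa_density_pos al sg L Hsg_al).
  assert (Hlin : forall s, 0 <= s -> m * s <= A s).
  { intros s Hs.
    pose proof (le_of_is_derive_nonneg (fun s => A s - m * s)
      (fun z => profile al L z / (sg * al) - m) 0 s Hs) as K.
    simpl in K. unfold A in K. rewrite abscissa_0 in K.
    enough (0 - m * 0 <= A s - m * s) by lra. apply K.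
    - intros z _. apply (is_derive_minus A (fun s => m * s)); [apply is_derive_abscissa |].
      auto_derive; auto; ring.
    - intros z _. unfold m. unfold Rdiv.
      pose proof (profile_0_le al L z Hal). pose proof (Rinv_0_lt_compat _ Hsg_al). nra. }
  assert (Habs : forall M, Rabs M <= A (Rabs M / m)).
  { intro M. replace (Rabs M) with (m * (Rabs M / m)) at 1 by (field; lra).
    apply Hlin, Rdiv_le_0_compat; [apply Rabs_pos | lra]. }
  apply (increasing_surjective A _ (is_derive_abscissa al sg L)
    (abscissa_density_pos al sg L Hsg_al)); intro M; pose proof (Habs M).
  - exists (Rabs M / m). pose proof (Rle_abs M). lra.
  - exists (- (Rabs M / m)). unfold A. rewrite abscissa_opp. fold A.
    pose proof (Rle_abs (- M)). rewrite Rabs_Ropp in *. lra.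
Qed.

Lemma abscissa_bounded al sg L : al < 0 -> 0 < sg * al ->
  exists B, forall s, Rabs (abscissa al sg L s) <= B.
Proof.
  intros Hal Hsg_al. set (A := abscissa al sg L).
  set (C := exp ((L - ln 2) / al) / (sg * al)).
  assert (HC : 0 < C) by (apply Rdiv_lt_0_compat; [apply exp_pos | exact Hsg_al]).
  assert (Hdensity : forall t, profile al L t / (sg * al) <= C * exp (t / al)).
  { intro t. unfold C, Rdiv. rewrite Rmult_assoc, (Rmult_comm (/ (sg * al))), <- Rmult_assoc.
    apply Rmult_le_compat_r; [left; now apply Rinv_0_lt_compat |].
    rewrite <- exp_plus. apply exp_le_compat.
    pose proof (lncosh_ge_sub_ln2 t). pose proof (Rinv_lt_0_compat al Hal). nra. }
  set (P := fun s => C * al * (exp (s / al) - 1)).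
  assert (Hbound : forall s, 0 <= s -> 0 <= A s <= C * - al).
  { intros s Hs. split.
    - rewrite <- (abscissa_0 al sg L).
      apply (le_of_is_derive_nonneg A (fun z => profile al L z / (sg * al)) 0 s Hs).
      + intros z _. apply is_derive_abscissa.
      + intros z _. left. now apply abscissa_density_pos.
    - enough (P 0 - A 0 <= P s - A s).
      { unfold P, A in *. rewrite Rdiv_0_l, exp_0, abscissa_0 in *.
        assert (0 < C * exp (s / al)) by (apply Rmult_lt_0_compat; [exact HC | apply exp_pos]).
        nra. }
      apply (le_of_is_derive_nonneg (fun s => P s - A s)
        (fun z => C * exp (z / al) - profile al L z / (sg * al)) 0 s Hs).
      + intros z _. apply (is_derive_minus P A); [| apply is_derive_abscissa].
        unfold P. auto_derive; [exact I |]. unfold Rdiv. field. lra.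
      + intros z _. specialize (Hdensity z). lra. }
  exists (C * - al). intro s. destruct (Rle_or_lt 0 s) as [Hs | Hs].
  - specialize (Hbound s Hs). rewrite Rabs_right; lra.
  - specialize (Hbound (- s) ltac:(lra)). unfold A in Hbound. rewrite abscissa_opp in Hbound.
    fold A in Hbound. rewrite Rabs_left1; lra.
Qed.

(** * Solutions of the equation *)

Section Solution.

Variables (al : R) (I : R -> Prop) (u : R -> R).
Hypothesis u_sol : is_solution al I u.

Lemma solution_is_interval : is_interval I.
Proof. exact (proj2 (proj2 (proj1 u_sol))). Qed.

Lemma solution_pos x : I x -> 0 < u x.
Proof. intro Hx. apply (proj2 u_sol x Hx). Qed.

Lemma solution_slope_bound x : I x -> -1 < Derive u x < 1.
Proof. intro Hx. destruct (proj2 u_sol x Hx) as (_ & _ & _ & H & _). nra. Qed.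

Lemma solution_is_derive x : I x -> is_derive u x (Derive u x).
Proof. intro Hx. apply Derive_correct, (proj2 u_sol x Hx). Qed.

Lemma solution_is_derive2 x : I x ->
  is_derive (Derive u) x (al * (1 - Derive u x ^ 2) / u x).
Proof.
  intro Hx. destruct (proj2 u_sol x Hx) as (_ & Hd2 & Hpos & Hbound & Hode).
  replace (al * (1 - Derive u x ^ 2) / u x) with (Derive (Derive u) x).
  - now apply Derive_correct.
  - replace (Derive (Derive u) x) with
      (Derive (Derive u) x / (1 - Derive u x ^ 2) * (1 - Derive u x ^ 2)) by (field; lra).
    rewrite Hode. field. lra.
Qed.

Lemma is_derive_artanh_slope x : I x ->
  is_derive (fun x => artanh (Derive u x)) x (al / u x).
Proof.
  intro Hx. pose proof (solution_slope_bound x Hx). pose proof (solution_pos x Hx).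
  replace (al / u x) with (al * (1 - Derive u x ^ 2) / u x * / (1 - Derive u x ^ 2))
    by (field; split; nra).
  apply (is_derive_comp artanh (Derive u)); [now apply is_derive_artanh |].
  now apply solution_is_derive2.
Qed.

Lemma solution_first_integral : al <> 0 ->
  exists L, forall x, I x -> u x = profile al L (artanh (Derive u x)).
Proof.
  intro Hal. destruct (proj1 (proj1 u_sol)) as [x0 Hx0].
  set (E := fun x => al * ln (u x) - lncosh (artanh (Derive u x))).
  assert (HE : forall x, I x -> is_derive E x 0).
  { intros x Hx. pose proof (solution_pos x Hx). pose proof (solution_slope_bound x Hx).
    replace 0 with (al * (Derive u x * / u x) - al / u x * tanh (artanh (Derive u x)))
      by (rewrite tanh_artanh by easy; field; lra).
    apply (is_derive_minus (fun x => al * ln (u x)) (fun x => lncosh (artanh (Derive u x)))).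
    - apply is_derive_scal, (is_derive_comp ln u); [| now apply solution_is_derive].
      now apply is_derive_Reals, derivable_pt_lim_ln.
    - apply (is_derive_comp lncosh); [apply is_derive_lncosh | now apply is_derive_artanh_slope]. }
  exists (E x0). intros x Hx.
  rewrite <- (is_derive_0_const_on I E solution_is_interval HE x x0 Hx Hx0).
  unfold profile, E. rewrite <- (exp_ln (u x)) at 1 by now apply solution_pos.
  f_equal. field. exact Hal.
Qed.

Lemma solution_parametrization sg : sg = 1 \/ sg = -1 -> 0 < sg * al ->
  exists L c, forall x, I x ->
    u x = profile al L (sg * artanh (Derive u x)) /\
    abscissa al sg L (sg * artanh (Derive u x)) = x - c.
Proof.
  intros Hsg Hsg_al.
  destruct (solution_first_integral ltac:(intros ->; lra)) as [L HL].
  set (w := fun x => sg * artanh (Derive u x)).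
  assert (Hu : forall x, I x -> u x = profile al L (w x))
    by (intros x Hx; unfold w; rewrite profile_sign by exact Hsg; now apply HL).
  set (K := fun x => abscissa al sg L (w x) - x).
  assert (HK : forall x, I x -> is_derive K x 0).
  { intros x Hx. pose proof (solution_pos x Hx).
    assert (sg <> 0 /\ al <> 0) as [] by (split; intros ->; lra).
    replace 0 with (sg * (al / u x) * (profile al L (w x) / (sg * al)) - 1)
      by (rewrite <- Hu by exact Hx; field; repeat split; auto; lra).
    apply (is_derive_minus (fun x => abscissa al sg L (w x)) (fun x => x)).
    - apply (is_derive_comp (abscissa al sg L) w); [now apply is_derive_abscissa |].
      now apply is_derive_scal, is_derive_artanh_slope.
    - exact (is_derive_id x). }
  destruct (proj1 (proj1 u_sol)) as [x0 Hx0].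
  exists L, (x0 - abscissa al sg L (w x0)). intros x Hx. split; [now apply Hu |].
  pose proof (is_derive_0_const_on I K solution_is_interval HK x x0 Hx Hx0).
  unfold K in *. fold (w x). lra.
Qed.

End Solution.

Definition explicit_solution (al sg L c x : R) : R :=
  profile al L (inverse_fun (abscissa al sg L) (x - c)).

Section ExplicitSolution.

Variables al sg L c : R.
Hypothesis sg_al_pos : 0 < sg * al.

Local Notation A := (abscissa al sg L).
Local Notation J := (translated_range (abscissa al sg L) c).

Let A_derive := is_derive_abscissa al sg L.
Let A_density_pos := abscissa_density_pos al sg L sg_al_pos.
Let J_open : open J := translated_range_open A _ A_derive A_density_pos c.

Lemma translated_range_abscissa_c : J c.
Proof. exists 0. rewrite abscissa_0. ring. Qed.

Lemma is_derive_inverse_abscissa x : J x ->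
  is_derive (fun x => inverse_fun A (x - c)) x
    (sg * al / profile al L (inverse_fun A (x - c))).
Proof.
  intro Hx. pose proof (profile_pos al L (inverse_fun A (x - c))).
  assert (sg <> 0 /\ al <> 0) as [] by (split; intros ->; lra).
  replace (sg * al / profile al L (inverse_fun A (x - c)))
    with (1 * / (profile al L (inverse_fun A (x - c)) / (sg * al)))
    by (field; repeat split; auto; lra).
  apply (is_derive_comp (inverse_fun A) (fun x => x - c)).
  - apply (is_derive_inverse_fun A _ A_derive A_density_pos), Hx.
  - auto_derive; auto; ring.
Qed.

Lemma is_derive_explicit_solution x : J x ->
  is_derive (explicit_solution al sg L c) x (sg * tanh (inverse_fun A (x - c))).
Proof.
  intro Hx. set (w := inverse_fun A (x - c)). pose proof (profile_pos al L w).
  assert (sg <> 0 /\ al <> 0) as [] by (split; intros ->; lra).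
  replace (sg * tanh w) with (sg * al / profile al L w * (profile al L w * (tanh w / al)))
    by (field; auto; lra).
  apply (is_derive_comp (profile al L) (fun x => inverse_fun A (x - c))).
  - apply is_derive_profile.
  - now apply is_derive_inverse_abscissa.
Qed.

Lemma is_derive2_explicit_solution x : J x ->
  is_derive (Derive (explicit_solution al sg L c)) x
    (sg * (sg * al / profile al L (inverse_fun A (x - c))
           * (1 - tanh (inverse_fun A (x - c)) ^ 2))).
Proof.
  intro Hx.
  assert (HD : locally x (fun y =>
            sg * tanh (inverse_fun A (y - c)) = Derive (explicit_solution al sg L c) y)).
  { apply (locally_open J); [exact J_open | | exact Hx].
    intros y Hy. symmetry. apply is_derive_unique. now apply is_derive_explicit_solution. }
  apply (is_derive_ext_loc _ _ x _ HD), is_derive_scal.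
  apply (is_derive_comp tanh (fun x => inverse_fun A (x - c))); [apply is_derive_tanh |].
  now apply is_derive_inverse_abscissa.
Qed.

Lemma explicit_solution_is_solution : sg = 1 \/ sg = -1 ->
  is_solution al J (explicit_solution al sg L c).
Proof.
  intro sg_sign. split; [split; [exists c; apply translated_range_abscissa_c | split] |].
  - exact J_open.
  - exact (translated_range_is_interval A _ A_derive A_density_pos c).
  - intros x Hx.
    pose proof (is_derive_explicit_solution x Hx) as HD.
    pose proof (is_derive2_explicit_solution x Hx) as HD2.
    rewrite (is_derive_unique _ _ _ HD), (is_derive_unique _ _ _ HD2).
    set (w := inverse_fun A (x - c)) in *.
    pose proof (tanh_bound w). pose proof (profile_pos al L w).
    assert (Hsg2 : sg * sg = 1) by (destruct sg_sign as [-> | ->]; ring).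
    replace ((sg * tanh w) ^ 2) with (tanh w ^ 2) by (rewrite Rpow_mult_distr; simpl; nra).
    split; [eexists; exact HD |]. split; [eexists; exact HD2 |].
    split; [apply profile_pos |]. split; [nra |].
    assert (E : sg * (sg * al / profile al L w * (1 - tanh w ^ 2)) / (1 - tanh w ^ 2)
                = sg * sg * al / profile al L w) by (field; split; nra).
    rewrite Hsg2, Rmult_1_l in E. exact E.
Qed.

End ExplicitSolution.

Lemma maximal_solution_explicit al I u sg : sg = 1 \/ sg = -1 -> 0 < sg * al ->
  is_maximal_solution al I u ->
  exists L c,
    (forall x, I x <-> translated_range (abscissa al sg L) c x) /\
    (forall x, I x ->
       u x = profile al L (inverse_fun (abscissa al sg L) (x - c)) /\
       Derive u x = sg * tanh (inverse_fun (abscissa al sg L) (x - c))).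
Proof.
  intros Hsg Hsg_al [Hsol Hmax].
  destruct (solution_parametrization al I u Hsol sg Hsg Hsg_al) as [L [c Hpar]].
  set (A := abscissa al sg L).
  assert (Hw : forall x, I x -> inverse_fun A (x - c) = sg * artanh (Derive u x)).
  { intros x Hx. rewrite <- (proj2 (Hpar x Hx)).
    apply (inverse_fun_comp A _ (is_derive_abscissa al sg L)
      (abscissa_density_pos al sg L Hsg_al)). }
  assert (HIJ : forall x, I x -> translated_range A c x).
  { intros x Hx. exists (sg * artanh (Derive u x)). apply Hpar, Hx. }
  assert (HJI : forall x, translated_range A c x -> I x).
  { apply (Hmax _ _ (explicit_solution_is_solution al sg L c Hsg_al Hsg) HIJ).
    intros x Hx. unfold explicit_solution. fold A. rewrite Hw by exact Hx.
    symmetry. apply Hpar, Hx. }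
  exists L, c. split; [split; auto |].
  intros x Hx. rewrite Hw by exact Hx. split; [apply Hpar, Hx |].
  rewrite tanh_sign, tanh_artanh by (exact Hsg || now apply (solution_slope_bound al I)).
  destruct Hsg as [-> | ->]; ring.
Qed.

(** * Shape of a maximal solution *)

Lemma unique_global_min_comp (I : R -> Prop) (u phi w : R -> R) c :
  I c -> w c = 0 -> (forall x, I x -> w x = 0 -> x = c) ->
  (forall x, I x -> u x = phi (w x)) -> (forall t, t <> 0 -> phi 0 < phi t) ->
  unique_global_min I u.
Proof.
  intros Ic Hwc Hw0 Hu Hphi. exists c. split; [exact Ic | split].
  - intros x Hx. rewrite !Hu, Hwc by assumption.
    destruct (Req_dec (w x) 0) as [-> | E]; [lra | left; now apply Hphi].
  - intros x Hx Hmin. apply Hw0; [exact Hx |].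
    destruct (Req_dec (w x) 0) as [E | E]; [exact E |].
    specialize (Hmin c Ic). rewrite !Hu, Hwc in Hmin by assumption.
    specialize (Hphi _ E). lra.
Qed.

Lemma unique_global_max_comp (I : R -> Prop) (u phi w : R -> R) c :
  I c -> w c = 0 -> (forall x, I x -> w x = 0 -> x = c) ->
  (forall x, I x -> u x = phi (w x)) -> (forall t, t <> 0 -> phi t < phi 0) ->
  unique_global_max I u.
Proof.
  intros Ic Hwc Hw0 Hu Hphi. exists c. split; [exact Ic | split].
  - intros x Hx. rewrite !Hu, Hwc by assumption.
    destruct (Req_dec (w x) 0) as [-> | E]; [lra | left; now apply Hphi].
  - intros x Hx Hmax. apply Hw0; [exact Hx |].
    destruct (Req_dec (w x) 0) as [E | E]; [exact E |].
    specialize (Hmax c Ic). rewrite !Hu, Hwc in Hmax by assumption.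
    specialize (Hphi _ E). lra.
Qed.

Section ExplicitMaximalSolution.

Variables (al sg L c : R) (I : R -> Prop) (u : R -> R).
Hypothesis sg_al_pos : 0 < sg * al.
Hypothesis u_sol : is_solution al I u.
Hypothesis I_range : forall x, I x <-> translated_range (abscissa al sg L) c x.
Hypothesis u_explicit : forall x, I x ->
  u x = profile al L (inverse_fun (abscissa al sg L) (x - c)) /\
  Derive u x = sg * tanh (inverse_fun (abscissa al sg L) (x - c)).

Local Notation A := (abscissa al sg L).
Local Notation F := (inverse_fun (abscissa al sg L)).

Let A_derive := is_derive_abscissa al sg L.
Let A_density_pos := abscissa_density_pos al sg L sg_al_pos.

Lemma solution_domain_c : I c.
Proof. apply I_range, translated_range_abscissa_c. Qed.

Lemma inverse_abscissa_c : F (c - c) = 0.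
Proof.
  rewrite Rminus_diag, <- (abscissa_0 al sg L) at 1.
  apply (inverse_fun_comp A _ A_derive A_density_pos).
Qed.

Lemma inverse_abscissa_eq_0 x : I x -> F (x - c) = 0 -> x = c.
Proof.
  intros Hx%I_range%inverse_fun_spec E. rewrite E, abscissa_0 in Hx. lra.
Qed.

Lemma inverse_abscissa_le x y : I x -> I y -> x <= y -> F (x - c) <= F (y - c).
Proof.
  intros Hx Hy [Hxy | ->]; [left | lra].
  apply (inverse_fun_lt A _ A_derive A_density_pos); [now apply I_range | now apply I_range | lra].
Qed.

Lemma solution_symmetric : symmetric_about_vertical_line I u.
Proof.
  exists c. intros x Hx. pose proof Hx as [s Hs]%I_range.
  assert (Hrefl : I (2 * c - x)).
  { apply I_range. exists (- s). rewrite abscissa_opp, Hs. ring. }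
  split; [exact Hrefl |].
  rewrite (proj1 (u_explicit _ Hrefl)), (proj1 (u_explicit _ Hx)).
  replace (2 * c - x - c) with (- (x - c)) by ring.
  rewrite (inverse_fun_opp A _ A_derive A_density_pos _ (abscissa_opp al sg L)) by now exists s.
  apply profile_opp.
Qed.

Lemma solution_convex : sg = 1 -> convex_on I u.
Proof.
  intro Hsg. apply (convex_on_of_derive_nondecreasing I u (Derive u)).
  - exact (solution_is_interval al I u u_sol).
  - exact (solution_is_derive al I u u_sol).
  - intros x y Hx Hy Hxy. rewrite (proj2 (u_explicit x Hx)), (proj2 (u_explicit y Hy)).
    apply Rmult_le_compat_l; [lra |]. now apply tanh_le, inverse_abscissa_le.
Qed.

Lemma solution_concave : sg = -1 -> concave_on I u.
Proof.
  intro Hsg. apply (concave_on_of_derive_nonincreasing I u (Derive u)).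
  - exact (solution_is_interval al I u u_sol).
  - exact (solution_is_derive al I u u_sol).
  - intros x y Hx Hy Hxy. rewrite (proj2 (u_explicit x Hx)), (proj2 (u_explicit y Hy)).
    apply Rmult_le_compat_neg_l; [lra |]. now apply tanh_le, inverse_abscissa_le.
Qed.

Lemma solution_unique_min : 0 < al -> unique_global_min I u.
Proof.
  intro Hal. apply (unique_global_min_comp I u (profile al L) (fun x => F (x - c)) c).
  - exact solution_domain_c.
  - exact inverse_abscissa_c.
  - exact inverse_abscissa_eq_0.
  - intros x Hx. apply u_explicit, Hx.
  - intros t Ht. now apply profile_0_lt.
Qed.

Lemma solution_unique_max : al < 0 -> unique_global_max I u.
Proof.
  intro Hal. apply (unique_global_max_comp I u (profile al L) (fun x => F (x - c)) c).
  - exact solution_domain_c.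
  - exact inverse_abscissa_c.
  - exact inverse_abscissa_eq_0.
  - intros x Hx. apply u_explicit, Hx.
  - intros t Ht. now apply profile_lt_0.
Qed.

Section UpperEnd.

Variable (Fend : (R -> Prop) -> Prop).
Hypothesis Fend_filter : Filter Fend.
Hypothesis Fend_domain : Fend I.
Hypothesis Fend_beyond : forall T, Fend (fun x => c + A T < x).

Lemma filterlim_inverse_abscissa_at_end :
  filterlim (fun x => F (x - c)) Fend (Rbar_locally p_infty).
Proof.
  intros P [M HM]. unfold filtermap. apply (filter_imp (fun x => I x /\ c + A M < x)).
  - intros x [Hx HxM]. apply HM. rewrite <- (inverse_fun_comp A _ A_derive A_density_pos M).
    apply (inverse_fun_lt A _ A_derive A_density_pos); [now exists M | now apply I_range | lra].
  - now apply filter_and.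
Qed.

Lemma filterlim_solution_at_end (l : Rbar) : is_lim (profile al L) p_infty l ->
  filterlim u Fend (Rbar_locally l).
Proof.
  intro Hl. apply (filterlim_ext_loc (fun x => profile al L (F (x - c)))).
  - apply (filter_imp I); [| exact Fend_domain]. intros x Hx. symmetry. apply u_explicit, Hx.
  - exact (filterlim_comp _ _ _ _ _ _ _ _ filterlim_inverse_abscissa_at_end Hl).
Qed.

Lemma filterlim_slope_at_end : filterlim (Derive u) Fend (locally sg).
Proof.
  apply (filterlim_ext_loc (fun x => sg * tanh (F (x - c)))).
  - apply (filter_imp I); [| exact Fend_domain]. intros x Hx. symmetry. apply u_explicit, Hx.
  - apply (filterlim_comp _ _ _ _ (fun t => sg * tanh t) _ _ _ filterlim_inverse_abscissa_at_end).
    pose proof (is_lim_scal_l tanh sg p_infty 1 is_lim_tanh_p) as K.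
    simpl in K. rewrite Rmult_1_r in K. exact K.
Qed.

End UpperEnd.

Lemma solution_domain_full : 0 < al -> forall x, I x.
Proof.
  intros Hal x. apply I_range. exact (abscissa_surjective al sg L Hal sg_al_pos (x - c)).
Qed.

Lemma solution_domain_bounded : al < 0 -> exists a b, forall x, I x -> a < x < b.
Proof.
  intro Hal. destruct (abscissa_bounded al sg L Hal sg_al_pos) as [B HB].
  exists (c - B - 1), (c + B + 1). intros x [s Hs]%I_range.
  specialize (HB s). rewrite Hs in HB. apply Rabs_le_between' in HB. lra.
Qed.

Lemma solution_limits_p_infty : 0 < al ->
  is_lim u p_infty p_infty /\ is_lim (Derive u) p_infty sg.
Proof.
  intro Hal.
  assert (HI : Rbar_locally p_infty I) by (apply filter_forall, solution_domain_full, Hal).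
  assert (Hbeyond : forall T, Rbar_locally p_infty (fun x => c + A T < x))
    by (intro T; now exists (c + A T)).
  split.
  - exact (filterlim_solution_at_end _ _ HI Hbeyond _ (is_lim_profile_pos al L Hal)).
  - exact (filterlim_slope_at_end _ _ HI Hbeyond).
Qed.

Lemma solution_limits_at_left b : al < 0 -> (forall x, I x <-> - b < x < b) ->
  filterlim u (at_left b) (locally 0) /\ filterlim (Derive u) (at_left b) (locally sg).
Proof.
  intros Hal Hb. pose proof (proj1 (Hb c) solution_domain_c).
  assert (HI : at_left b I).
  { exists (mkposreal (2 * b) ltac:(lra)). intros x Hx Hxb.
    change (Rabs (x - b) < 2 * b) in Hx. apply Rabs_def2 in Hx. apply Hb. lra. }
  assert (Hbeyond : forall T, at_left b (fun x => c + A T < x)).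
  { intro T. assert (HT : - b < c + A T < b) by (apply Hb, I_range; exists T; ring).
    exists (mkposreal (b - (c + A T)) ltac:(lra)). intros x Hx Hxb.
    change (Rabs (x - b) < b - (c + A T)) in Hx. apply Rabs_def2 in Hx. lra. }
  split.
  - exact (filterlim_solution_at_end _ _ HI Hbeyond _ (is_lim_profile_neg al L Hal)).
  - exact (filterlim_slope_at_end _ _ HI Hbeyond).
Qed.

End ExplicitMaximalSolution.

Theorem theorem2p2 (alpha : R) (I : R -> Prop) (u : R -> R) :
  alpha <> 0 ->
  is_maximal_solution alpha I u ->
  symmetric_about_vertical_line I u /\
  (0 < alpha ->
     (forall x, I x) /\
     convex_on I u /\ unique_global_min I u /\
     is_lim u p_infty p_infty /\
     is_lim (Derive u) p_infty 1) /\
  (alpha < 0 ->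
     (exists a b, forall x, I x -> a < x < b) /\
     concave_on I u /\ unique_global_max I u /\
     (forall b, (forall x, I x <-> - b < x < b) ->
        filterlim u (at_left b) (locally 0) /\
        filterlim (Derive u) (at_left b) (locally (-1)))).
Proof.
  intros Halpha Hmax. pose proof (proj1 Hmax) as Hsol.
  destruct (Rlt_or_le 0 alpha) as [Hpos | Hle]; [| assert (Hneg : alpha < 0) by lra].
  - assert (Hsg : 1 = 1 \/ 1 = -1) by now left. assert (Hsg_al : 0 < 1 * alpha) by lra.
    destruct (maximal_solution_explicit alpha I u 1 Hsg Hsg_al Hmax) as (L & c & HI & Hu).
    split; [exact (solution_symmetric alpha 1 L c I u Hsg_al HI Hu) |].
    split; [| intro; lra]. intros _.
    split; [exact (solution_domain_full alpha 1 L c I Hsg_al HI Hpos) |].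
    split; [exact (solution_convex alpha 1 L c I u Hsg_al Hsol HI Hu eq_refl) |].
    split; [exact (solution_unique_min alpha 1 L c I u Hsg_al HI Hu Hpos) |].
    exact (solution_limits_p_infty alpha 1 L c I u Hsg_al HI Hu Hpos).
  - assert (Hsg : -1 = 1 \/ -1 = -1) by now right. assert (Hsg_al : 0 < -1 * alpha) by lra.
    destruct (maximal_solution_explicit alpha I u (-1) Hsg Hsg_al Hmax) as (L & c & HI & Hu).
    split; [exact (solution_symmetric alpha (-1) L c I u Hsg_al HI Hu) |].
    split; [intro; lra |]. intros _.
    split; [exact (solution_domain_bounded alpha (-1) L c I Hsg_al HI Hneg) |].
    split; [exact (solution_concave alpha (-1) L c I u Hsg_al Hsol HI Hu eq_refl) |].
    split; [exact (solution_unique_max alpha (-1) L c I u Hsg_al HI Hu Hneg) |].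
    intros b Hb. exact (solution_limits_at_left alpha (-1) L c I u Hsg_al HI Hu b Hneg Hb).
Qed.
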